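(* Let $(X_i)_{i\in\mathbb{Z}}$ be a finite-energy process over a countable alphabet $\mathbb{X}$. Then for every $q>0$, $$\sup_{n\ge2}\mathbb{E}\left[\left(\frac{\mathbf{L}(X_{1:n})}{\log n}\right)^q\right]<\infty.$$
   Context: A stationary process is finite-energy if there are constants $c<1$ and $K$ with $P(X_{n+1:n+m}=u\mid X_{1:n}=w)\le Kc^m$ whenever $P(X_{1:n}=w)>0$, $n,m\in\mathbb{N}$. $\mathbf{L}(w):=\max\{|s|: w=x_1sy_1=x_2sy_2,\ x_1\ne x_2\}$ with $s,x_i,y_i$ finite (possibly empty) strings: the maximal length of a possibly overlapping repeat in $w$. $\log$ is natural. *)

From HB Require Import structures.
From mathcomp Require Import all_boot all_order all_algebra.
From mathcomp Require Import all_classical all_reals all_analysis.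
Set Implicit Arguments. Unset Strict Implicit. Unset Printing Implicit Defensive.
Import Order.TTheory GRing.Theory Num.Theory.
Local Open Scope ring_scope.
Local Open Scope classical_set_scope.

(* L(w): maximal length k of a (possibly overlapping) repeat in w, i.e. the
   largest k such that the factor of length k starting at position i equals
   the factor of length k starting at position j, for two distinct positions
   i <> j (positions i = |x1|, j = |x2| in  w = x1 s y1 = x2 s y2). *)
Definition maxrep {A : eqType} (w : seq A) : nat :=
  \max_(0 <= i < (size w).+1) \max_(0 <= j < (size w).+1)
   \max_(0 <= k < (size w).+1 | [&& i != j, (i + k <= size w)%N,
                                  (j + k <= size w)%N &
                                  take k (drop i w) == take k (drop j w)]) k.

(* the block X_{t+1:t+n} = (X_{t+1}, ..., X_{t+n}) *)
Definition blk {T A : Type} (X : int -> T -> A) (t : int) (n : nat) (x : T)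
  : seq A := [seq X (t + (i%:Z))%R x | i <- iota 1 n].

Section Process.
Context {d : measure_display} {T : measurableType d} {R : realType}.
Context (P : probability T R) {A : countType}.

Definition process (X : int -> T -> A) : Prop :=
  forall (i : int) (a : A), measurable (X i @^-1` [set a]).

Definition stationary (X : int -> T -> A) : Prop :=
  forall (s : seq int) (t : int) (w : seq A),
    P [set x : T | [seq X i x | i <- s] = w] =
    P [set x : T | [seq X (i + t)%R x | i <- s] = w].

Definition finite_energy (X : int -> T -> A) : Prop :=
  exists (c K : R), c < 1 /\
    forall (n m : nat) (w u : seq A), (0 < n)%N -> (0 < m)%N ->
      (0 < P [set x : T | blk X 0 n x = w])%E ->
      fine (P [set x : T | blk X 0 n x = w /\ blk X n%:Z m x = u])
        / fine (P [set x : T | blk X 0 n x = w]) <= K * c ^+ m.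
End Process.

From HB Require Import structures.
From mathcomp Require Import all_boot all_order all_algebra.
From mathcomp Require Import all_classical all_reals all_analysis.
From mathcomp Require Import measurable_realfun zify ring lra.
Import Order.TTheory GRing.Theory Num.Theory.
Local Open Scope ring_scope.
Set Implicit Arguments. Unset Strict Implicit. Unset Printing Implicit Defensive.

(* If L(X_{1:n}) >= k, two distinct positions i < j start equal blocks of
   length k; the block at j is then the periodic extension of X_{i+1:j}, so by
   stationarity and finite energy this has probability at most K c^k.  A union
   bound over the (n+1)^2 pairs of positions gives P(L >= k) <= (n+1)^2 K c^k.
   Choosing k ~ (q+3)/(-ln c) * ln n and splitting the moment at k bounds
   E[(L / ln n)^q] by a constant plus (n / ln n)^q (n+1)^2 K c^k = O(1/n). *)

Section Blocks.
Context {T A : Type} (X : int -> T -> A).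

Lemma size_blk t n x : size (blk X t n x) = n.
Proof. by rewrite /blk size_map size_iota. Qed.

Lemma blkD t m1 m2 x :
  blk X t (m1 + m2) x = blk X t m1 x ++ blk X (t + m1%:Z) m2 x.
Proof.
rewrite /blk iotaD map_cat addnC iotaDl -map_comp; congr (_ ++ _).
by apply: eq_map => i /=; rewrite PoszD addrA.
Qed.

Lemma nth_blk a0 t n x l : (l < n)%N -> nth a0 (blk X t n x) l = X (t + l.+1%:Z) x.
Proof. by move=> ln; rewrite /blk (nth_map 0%N) ?size_iota // nth_iota // add1n. Qed.

Lemma take_blk t m r x : take m (blk X t (m + r) x) = blk X t m x.
Proof. by rewrite blkD take_size_cat ?size_blk. Qed.

Lemma drop_blk t m r x : drop m (blk X t (m + r) x) = blk X (t + m%:Z) r x.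
Proof. by rewrite blkD drop_size_cat ?size_blk. Qed.

Lemma take_drop_blk n i k x : (i + k <= n)%N ->
  take k (drop i (blk X 0 n x)) = blk X i%:Z k x.
Proof. by move=> h; rewrite -(subnKC h) -addnA drop_blk add0r take_blk. Qed.

Lemma blk_catP t p k x (v u : seq A) : size u = k ->
  blk X t (p + k) x = v ++ u -> blk X t p x = v /\ blk X (t + p%:Z) k x = u.
Proof.
move=> uk; rewrite blkD => E.
have sv : size v = p.
  by have := congr1 size E; rewrite !size_cat !size_blk uk => /addIn.
have := congr1 (take p) E; have := congr1 (drop p) E.
by rewrite !take_size_cat ?drop_size_cat ?size_blk // => -> ->.
Qed.

End Blocks.

(* The first k letters of v v v ...; the default a0 is never read when
   size v = p > 0. *)
Definition periodic {A : Type} (a0 : A) (p k : nat) (v : seq A) : seq A :=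
  mkseq (fun t => nth a0 v (t %% p)%N) k.

Lemma size_periodic {A : Type} (a0 : A) p k v : size (periodic a0 p k v) = k.
Proof. exact: size_mkseq. Qed.

Lemma eq_mod_period {B : Type} (f : nat -> B) p k :
  (forall t, (t < k)%N -> f (p + t)%N = f t) ->
  forall t, (t < p + k)%N -> f t = f (t %% p)%N.
Proof.
move=> fP; have [->|p0] := posnP p; first by move=> t; rewrite modn0.
elim/ltn_ind => t IH tpk; have [tp|pt] := ltnP t p.
  by rewrite modn_small.
have tE : t = (p + (t - p))%N by rewrite subnKC.
rewrite tE modnDl fP; last lia.
apply: IH; lia.
Qed.

Lemma blk_periodic {T A : Type} (X : int -> T -> A) (a0 : A) (i : int) p k x :
  (0 < p)%N -> blk X i k x = blk X (i + p%:Z) k x ->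
  blk X (i + p%:Z) k x = periodic a0 p k (blk X i p x).
Proof.
move=> p0 E; pose g l := X (i + l.+1%:Z) x.
have gP t : (t < k)%N -> g (p + t)%N = g t.
  move=> tk; have := congr1 (nth a0 ^~ t) E.
  by rewrite !nth_blk // /g -addrA -PoszD addnS => ->.
apply: (@eq_from_nth _ a0) => [|t]; first by rewrite size_blk size_periodic.
rewrite size_blk => tk; rewrite nth_mkseq // !nth_blk ?ltn_pmod //.
rewrite -addrA -PoszD addnS.
change (g (p + t)%N = g (t %% p)%N).
rewrite gP //; apply: (eq_mod_period gP); lia.
Qed.

Section Maxrep.
Context {A : eqType}.

Lemma maxrep_le_size (w : seq A) : (maxrep w <= size w)%N.
Proof.
apply/bigmax_leqP_seq => i _ _; apply/bigmax_leqP_seq => j _ _.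
by apply/bigmax_leqP_seq => k; rewrite mem_index_iota ltnS => /andP[].
Qed.

Lemma maxrep_repeat (w : seq A) k : (0 < k)%N -> (k <= maxrep w)%N ->
  exists i j, [/\ i != j, (i + k <= size w)%N, (j + k <= size w)%N &
                  take k (drop i w) = take k (drop j w)].
Proof.
move=> k0; apply: contraPP => noRep; apply/negP; rewrite -ltnNge -(prednK k0) ltnS.
apply/bigmax_leqP_seq => i; rewrite mem_index_iota => /andP[_ iw] _.
apply/bigmax_leqP_seq => j; rewrite mem_index_iota => /andP[_ jw] _.
apply/bigmax_leqP_seq => k' _ /and4P[ij ik jk /eqP e].
rewrite -ltnS prednK // ltnNge; apply/negP => kk'; apply: noRep.
exists i, j; split => //.
- by apply: leq_trans ik; rewrite leq_add2l.
- by apply: leq_trans jk; rewrite leq_add2l.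
by rewrite -(take_takel _ kk') e take_takel.
Qed.

End Maxrep.

Local Open Scope classical_set_scope.

Lemma measure_cover_le {d} {T : measurableType d} {R : realType}
    (mu : {measure set T -> \bar R}) {J : countType} (S B : J -> set T)
    (U : set T) (r : R) :
  0 <= r -> measurable U -> (forall i, measurable (S i)) ->
  (forall i, measurable (B i)) -> trivIset setT B ->
  U `<=` \bigcup_i S i -> (forall i, mu (S i) <= r%:E * mu (B i))%E ->
  (mu U <= r%:E * mu (\bigcup_i B i))%E.
Proof.
move=> r0 mU mS mB tB US SB.
pose idx (F : J -> set T) l := if pickle_inv l is Some i then F i else set0.
have m_idx F : (forall i, measurable (F i)) -> forall l, measurable (idx F l).
  by move=> mF l; rewrite /idx; case: pickle_inv.
have bigcup_idx F : \bigcup_l idx F l = \bigcup_i F i.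
  apply/seteqP; split => [x [l _]|x [i _ Fx]]; rewrite /idx.
    by case: pickle_inv => // i Fx; exists i.
  by exists (pickle i) => //; rewrite pickleK_inv.
have tB' : trivIset setT (idx B).
  move=> l l' _ _; rewrite /idx.
  case El: pickle_inv => [i|]; case El': pickle_inv => [i'|]; try by case=> ? [].
  move=> /(tB _ _ I I) ii'.
  by rewrite -(@pickle_invK J l) -(@pickle_invK J l') El El' /= ii'.
rewrite -bigcup_idx (@measure_semi_bigcup _ _ _ mu _ (m_idx _ mB) tB'); last first.
  exact: bigcupT_measurable (m_idx _ mB).
have cover : U `<=` \bigcup_l idx S l by rewrite bigcup_idx.
rewrite -nneseriesZl //.
apply: le_trans (@measure_sigma_subadditive _ _ _ mu _ _ (m_idx _ mS) mU cover) _.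
apply: lee_nneseries => // l _; rewrite /idx; case: pickle_inv => //.
by rewrite !measure0 mule0.
Qed.

Section Measurability.
Context {d : measure_display} {T : measurableType d} {A : countType}.
Context (X : int -> T -> A) (hX : process X).

Lemma measurable_map_eq (f : nat -> int) (s : seq nat) (w : seq A) :
  measurable [set x | [seq X (f i) x | i <- s] = w].
Proof.
elim: s w => [|i s IH] [|a w] /=.
- by rewrite (_ : [set _ | _] = setT) //; apply/seteqP; split => x.
- by rewrite (_ : [set _ | _] = set0) //; apply/seteqP; split => x.
- by rewrite (_ : [set _ | _] = set0) //; apply/seteqP; split => x.
rewrite (_ : [set _ | _] =
  X (f i) @^-1` [set a] `&` [set x | [seq X (f i) x | i <- s] = w]).
  exact: measurableI.
by apply/seteqP; split => x /=; [case=> -> -> | case=> -> ->].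
Qed.

Lemma measurable_blk2 (Q : seq A -> seq A -> Prop) t m t' m' :
  measurable [set x | Q (blk X t m x) (blk X t' m' x)].
Proof.
rewrite (_ : [set _ | _] = \bigcup_(w : seq A * seq A)
    [set x | Q w.1 w.2 /\ blk X t m x = w.1 /\ blk X t' m' x = w.2]).
  apply: countable_bigcupT_measurable => [|[w w']]; first exact: countableP.
  have [Qw|nQw] := pselect (Q w w').
    rewrite (_ : [set _ | _] =
      [set x | blk X t m x = w] `&` [set x | blk X t' m' x = w']).
      by apply: measurableI; exact: measurable_map_eq.
    by apply/seteqP; split => [x [_ []]|x []].
  by rewrite (_ : [set _ | _] = set0) //; apply/seteqP; split => x // [].
apply/seteqP; split => [x Qx|x [[w w'] _ [Qw [wE w'E]]]].
  by exists (blk X t m x, blk X t' m' x).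
by rewrite /= wE w'E.
Qed.

Lemma measurable_blk (Q : seq A -> Prop) t m :
  measurable [set x | Q (blk X t m x)].
Proof. exact: (measurable_blk2 (fun v _ => Q v) t m 0 0). Qed.

End Measurability.

Lemma energy_const_le {R : realFieldType} (c K : R) m : (0 < m)%N ->
  (forall m', (0 < m')%N -> 0 <= K * c ^+ m') ->
  K * c ^+ m <= Num.max K 0 * Num.max c 2^-1 ^+ m.
Proof.
move=> m0 pos; have K'0 : 0 <= Num.max K 0 by rewrite le_max lexx orbT.
have c'0 : 0 <= Num.max c 2^-1 by rewrite le_max invr_ge0 ler0n orbT.
have [c0|c0] := leP 0 c.
  apply: (@le_trans _ _ (Num.max K 0 * c ^+ m)).
    by apply: ler_wpM2r; rewrite ?exprn_ge0 // le_max lexx.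
  by apply: ler_wpM2l => //; apply: lerXn2r; rewrite ?nnegrE // le_max lexx.
(* For c < 0, K c^m and K c^(m+1) = c (K c^m) are both nonnegative, so K c^m = 0. *)
have Kcm := pos m m0; have KcSm := pos m.+1 isT; rewrite exprS mulrCA in KcSm.
have rhs0 : 0 <= Num.max K 0 * Num.max c 2^-1 ^+ m by rewrite mulr_ge0 ?exprn_ge0.
nra.
Qed.

Section FiniteEnergy.
Context {d : measure_display} {T : measurableType d} {R : realType}.
Context (P : probability T R) {A : countType} (X : int -> T -> A).

Definition energy_bounded (c K : R) : Prop :=
  forall (n m : nat) (w u : seq A), (0 < n)%N -> (0 < m)%N ->
  (P [set x | blk X 0 n x = w /\ blk X n%:Z m x = u] <=
    (K * c ^+ m)%:E * P [set x | blk X 0 n x = w])%E.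

Lemma finite_energy_bounded : process X -> finite_energy P X ->
  exists c K, [/\ 0 < c, c < 1, 0 <= K & energy_bounded c K].
Proof.
move=> hX [c [K [c1 hfe]]]; exists (Num.max c 2^-1), (Num.max K 0); split.
- by rewrite lt_max invr_gt0 ltr0n orbT.
- by rewrite gt_max c1 invf_lt1 ?ltr0n ?ltr1n.
- by rewrite le_max lexx orbT.
move=> n m w u n0 m0; set B := [set x | blk X 0 n x = w].
have mB : measurable B by exact: (measurable_blk hX (eq^~ w)).
have mBG m' u' : measurable [set x | blk X 0 n x = w /\ blk X n%:Z m' x = u'].
  exact: (measurable_blk2 hX (fun v v' => v = w /\ v' = u')).
have finP (S : set T) : measurable S -> P S \is a fin_num.
  by move=> mS; rewrite ge0_fin_numE // (le_lt_trans (probability_le1 P mS)) ?ltry.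
have [B0|Bpos] := eqVneq (P B) 0.
  rewrite B0 mule0 -B0; apply: le_measure; rewrite ?inE //.
  by move=> x [].
have fB0 : 0 < fine (P B).
  by rewrite fine_gt0 // lt0e Bpos measure_ge0 /= -ge0_fin_numE ?finP.
have ratio m' u' : (0 < m')%N ->
    fine (P [set x | blk X 0 n x = w /\ blk X n%:Z m' x = u']) <=
    K * c ^+ m' * fine (P B).
  move=> m'0; rewrite -ler_pdivrMr //; apply: hfe => //.
  by rewrite lt0e Bpos measure_ge0.
have Kc0 m' : (0 < m')%N -> 0 <= K * c ^+ m'.
  move=> m'0; rewrite -(pmulr_lge0 _ fB0); apply: le_trans (ratio m' u m'0).
  exact: fine_ge0.
rewrite -(fineK (finP _ (mBG m u))) -(fineK (finP _ mB)) -EFinM lee_fin.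
apply: le_trans (ratio m u m0) _; apply: ler_wpM2r; first exact: ltW.
exact: energy_const_le.
Qed.

End FiniteEnergy.

Lemma measure_bigsetU_const_le {d} {T : measurableType d} {R : realFieldType}
    (mu : {measure set T -> \bar R}) (U : set T) (F : nat -> set T) N (y : R) :
  measurable U -> (forall k, measurable (F k)) ->
  U `<=` \big[setU/set0]_(k < N) F k -> (forall k, (k < N)%N -> (mu (F k) <= y%:E)%E) ->
  (mu U <= (y *+ N)%:E)%E.
Proof.
move=> mU mF UF Fy.
apply: le_trans (@content_subadditive _ _ _ mu U F N (fun k _ => mF k) mU UF) _.
have -> : (y *+ N)%:E = (\sum_(k < N) y%:E)%E by rewrite sumEFin sumr_const card_ord.
by apply: lee_sum => k _; exact: Fy.
Qed.

Section RepeatProbability.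
Context {d : measure_display} {T : measurableType d} {R : realType}.
Context (P : probability T R) {A : countType} (X : int -> T -> A).
Hypotheses (hX : process X) (hS : stationary P X).
Variables (c K : R).
Hypotheses (c0 : 0 <= c) (K0 : 0 <= K) (hE : energy_bounded P X c K).

Lemma stationary_blk t m w :
  P [set x | blk X t m x = w] = P [set x | blk X 0 m x = w].
Proof.
have E (f : int -> int) t' : (forall i, f i = t' + i) ->
    [set x | [seq X (f i) x | i <- [seq i%:Z | i <- iota 1 m]] = w] =
    [set x | blk X t' m x = w].
  move=> fE; apply/seteqP; split => x /=; rewrite -map_comp;
  by under eq_map do rewrite /= fE.
rewrite -(E (fun i => i + t) t) => [|i]; last by rewrite addrC.
rewrite -(E id 0) => [|i]; last by rewrite add0r.
exact/esym/hS.
Qed.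

(* A repeat with shift p forces the block at i + p to be the periodic extension
   of the block at i, which finite energy makes exponentially unlikely in k. *)
Lemma repeat_prob_le (a0 : A) (i : int) p k : (0 < p)%N -> (0 < k)%N ->
  (P [set x | blk X i k x = blk X (i + p%:Z) k x] <= (K * c ^+ k)%:E)%E.
Proof.
move=> p0 k0; have Kc0 : 0 <= K * c ^+ k by rewrite mulr_ge0 ?exprn_ge0.
pose S v := [set x | blk X i (p + k) x = v ++ periodic a0 p k v].
pose B v := [set x | blk X 0 p x = v].
have mS v : measurable (S v) by exact: (measurable_blk hX (eq^~ _)).
have mB v : measurable (B v) by exact: (measurable_blk hX (eq^~ _)).
have cover : [set x | blk X i k x = blk X (i + p%:Z) k x] `<=` \bigcup_v S v.
  move=> x /= rep; exists (blk X i p x) => //.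
  by rewrite /S /= blkD (blk_periodic a0 p0 rep).
have tB : trivIset setT B by move=> v v' _ _ [x [/= <- <-]].
have SB v : (P (S v) <= (K * c ^+ k)%:E * P (B v))%E.
  rewrite /S stationary_blk; apply: le_trans (hE v (periodic a0 p k v) p0 k0).
  apply: le_measure; rewrite ?inE //; first exact: (measurable_blk hX (eq^~ _)).
    exact: (measurable_blk2 hX (fun w w' => w = v /\ w' = periodic a0 p k v)).
  by move=> x /= /(blk_catP (size_periodic a0 p k v)); rewrite add0r.
have mRep : measurable [set x | blk X i k x = blk X (i + p%:Z) k x].
  exact: (measurable_blk2 hX (fun w w' => w = w')).
apply: le_trans (measure_cover_le Kc0 mRep mS mB tB cover SB) _.
rewrite -[leRHS]mule1; apply: lee_wpmul2l; first by rewrite lee_fin.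
exact: probability_le1 (countable_bigcupT_measurable (countableP _) mB).
Qed.

Lemma maxrep_tail_le (a0 : A) n k : (0 < k)%N ->
  (P [set x | (k <= maxrep (blk X 0 n x))%N] <= ((K * c ^+ k) *+ (n.+1 * n.+1))%:E)%E.
Proof.
move=> k0; pose H i j := [set x | i != j /\ blk X i%:Z k x = blk X j%:Z k x].
pose G i := \big[setU/set0]_(j < n.+1) H i j.
have mH i j : measurable (H i j).
  exact: (measurable_blk2 hX (fun w w' => i != j /\ w = w')).
have mG i : measurable (G i) by apply: bigsetU_measurable => j _; exact: mH.
have HP i j : (P (H i j) <= (K * c ^+ k)%:E)%E.
  wlog ij : i j / (i < j)%N => [W|].
    have [/W //|ji|<-] := ltngtP i j.
      rewrite (_ : H i j = H j i); first exact: W.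
      by apply/seteqP; split => x [ij e]; split; rewrite 1?eq_sym.
    rewrite (_ : H i i = set0) ?measure0 ?lee_fin ?mulr_ge0 ?exprn_ge0 //.
    by apply/seteqP; split => x // [/eqP].
  have sub : H i j `<=` [set x | blk X i%:Z k x = blk X (i%:Z + (j - i)%N%:Z) k x].
    by move=> x [_]; rewrite -PoszD subnKC // ltnW.
  apply: le_trans (le_measure _ _ _ sub) (repeat_prob_le a0 _ _ k0); rewrite ?inE //.
    exact: (measurable_blk2 hX (fun w w' => w = w')).
  by rewrite subn_gt0.
have cover : [set x | (k <= maxrep (blk X 0 n x))%N] `<=` \big[setU/set0]_(i < n.+1) G i.
  move=> x /= /(maxrep_repeat k0)[i [j [ij]]]; rewrite size_blk => ik jk e.
  have ltn_n l : (l + k <= n)%N -> (l < n.+1)%N.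
    by move=> lk; rewrite ltnS (leq_trans _ lk) ?leq_addr.
  rewrite -bigcup_mkord; exists i; first exact: ltn_n.
  rewrite /G -bigcup_mkord; exists j; first exact: ltn_n.
  by split => //; rewrite -(take_drop_blk _ _ ik) -(take_drop_blk _ _ jk).
have mE : measurable [set x | (k <= maxrep (blk X 0 n x))%N].
  exact: (measurable_blk hX (fun w => (k <= maxrep w)%N)).
rewrite mulrnA; apply: (measure_bigsetU_const_le mE mG cover) => i _.
exact: measure_bigsetU_const_le (mG i) (mH i) (fun y Gy => Gy) (fun j _ => HP i j).
Qed.

End RepeatProbability.

Lemma powR_ratio_le_split {R : realType} (q a L : R) (m n k : nat) :
  0 <= q -> 0 < L -> (m <= n)%N -> (k.-1)%:R <= a * L ->
  (m%:R / L) `^ q <= a `^ q + (n%:R / L) `^ q * (k <= m)%N%:R.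
Proof.
move=> q0 L0 mn kL; have mL0 : 0 <= m%:R / L by rewrite divr_ge0 // ltW.
have [km|mk] := leqP k m.
  rewrite mulr1; apply: ler_wpDl; first exact: powR_ge0.
  by apply: ge0_ler_powR; rewrite ?nnegrE ?divr_ge0 ?ler_pM2r ?invr_gt0 ?ler_nat // ltW.
have mLa : m%:R / L <= a.
  rewrite ler_pdivrMr // (le_trans _ kL) // ler_nat -ltnS prednK //.
  exact: leq_ltn_trans mk.
rewrite mulr0 addr0; apply: ge0_ler_powR; rewrite ?nnegrE //; exact: le_trans mLa.
Qed.

Section Moment.
Context {d : measure_display} {T : measurableType d} {R : realType}.
Context (P : probability T R) {A : countType} (X : int -> T -> A).
Hypothesis hX : process X.

Lemma integral_maxrep_le (q a : R) n k : 0 <= q -> 0 < ln (n%:R : R) ->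
  (k.-1)%:R <= a * ln n%:R ->
  (\int[P]_x (((maxrep (blk X 0 n x))%:R / ln n%:R) `^ q)%:E <=
    (a `^ q)%:E + ((n%:R / ln n%:R) `^ q)%:E *
                  P [set x | (k <= maxrep (blk X 0 n x))%N])%E.
Proof.
move=> q0 L0 kL; set E := [set x | _]; set B := (n%:R / ln n%:R) `^ q.
have mE : measurable E by exact: (measurable_blk hX (fun w => (k <= maxrep w)%N)).
have B0 : 0 <= B by exact: powR_ge0.
apply: (@le_trans _ _ (\int[P]_x ((a `^ q)%:E + (B * (\1_E x : R))%:E))%E).
  apply: ge0_le_integral => //.
  - by move=> x _; rewrite lee_fin powR_ge0.
  - move=> _ Y mY; rewrite setTI.
    exact: (measurable_blk hX (fun w => Y ((((maxrep w)%:R / ln n%:R) `^ q)%:E))).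
  - by apply: emeasurable_funD => //; apply/measurable_EFinP/measurable_funM => //;
      exact: measurable_indic.
  move=> x _; rewrite -EFinD lee_fin indicE.
  have := maxrep_le_size (blk X 0 n x); rewrite size_blk => mn.
  have -> : (x \in E) = (k <= maxrep (blk X 0 n x))%N by apply/idP/idP; rewrite inE.
  exact: powR_ratio_le_split.
rewrite ge0_integralD //; last 3 first.
- by move=> x _; rewrite lee_fin powR_ge0.
- by move=> x _; rewrite lee_fin mulr_ge0.
- by apply/measurable_EFinP/measurable_funM => //; exact: measurable_indic.
have -> : (\int[P]_x (a `^ q)%:E = (a `^ q)%:E)%E.
  by rewrite integral_cst // -[RHS]mule1; congr (_ * _)%E; exact: probability_setT.
rewrite leeD2l //.
rewrite (eq_integral (fun x => (B%:E * (\1_E x)%:E)%E)); last first.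
  by move=> x _; rewrite EFinM.
rewrite ge0_integralZl_EFin //; last exact/measurable_EFinP/measurable_indic.
by rewrite integral_indic // setIT.
Qed.

End Moment.

Section Asymptotics.
Context {R : realType}.

Lemma exprn_le_expRN (c b : R) k : 0 < c -> c < 1 -> b / - ln c <= k%:R ->
  c ^+ k <= expR (- b).
Proof.
move=> c0 c1; have lnc : 0 < - ln c by rewrite oppr_gt0 ln_lt0 // c0 c1.
rewrite ler_pdivrMr // mulrN => bk.
by rewrite -(powR_mulrn _ (ltW c0)) /powR gt_eqF // ler_expR; lra.
Qed.

(* With k >= a ln n, the factor c^k = O(n^-(q+3)) absorbs the (n+1)^2 pairs
   of positions and the growth (n / ln n)^q. *)
Lemma tail_term_le (q c K : R) (n k : nat) :
  0 < q -> 0 < c -> c < 1 -> 0 <= K -> (2 <= n)%N ->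
  (q + 3) / - ln c * ln n%:R <= k%:R ->
  (n%:R / ln n%:R) `^ q * ((K * c ^+ k) *+ (n.+1 * n.+1)) <= 4 * K * (ln 2)^-1 `^ q.
Proof.
move=> q0 c0 c1 K0 n2 hk; set N : R := n%:R; set L := ln N.
have N0 : 0 < N by rewrite /N ltr0n (leq_trans _ n2).
have l20 : 0 < ln (2 : R) by rewrite ln_gt0 ?ltr1n.
have L2 : ln 2 <= L by rewrite ler_ln ?posrE ?ler_nat.
have NL : expR L = N by rewrite /L lnK ?posrE.
set C := (ln 2)^-1 `^ q; have C0 : 0 <= C by exact: powR_ge0.
have S1 : (N / L) `^ q <= expR (q * L) * C.
  apply: (@le_trans _ _ ((N * (ln 2)^-1) `^ q)).
    have L0 : 0 < L by exact: lt_le_trans l20 L2.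
    apply: ge0_ler_powR; rewrite ?nnegrE ?divr_ge0 //; try exact: ltW.
    by rewrite ler_pM2l // lef_pV2 ?posrE.
  by rewrite powRM ?invr_ge0 ?(ltW N0) ?(ltW l20) // {1}/powR gt_eqF.
have S2 : c ^+ k <= expR (- ((q + 3) * L)).
  by apply: exprn_le_expRN => //; rewrite mulrAC.
have S3 : (n.+1 * n.+1)%N%:R <= 4 * expR L * expR L :> R.
  have N1 : 1 <= N by rewrite /N ler1n (leq_trans _ n2).
  by rewrite natrM -addn1 natrD -/N NL; nra.
rewrite -mulr_natr; apply: (@le_trans _ _
    ((expR (q * L) * C) * (K * expR (- ((q + 3) * L)) * (4 * expR L * expR L)))).
  apply: ler_pM; rewrite ?powR_ge0 ?mulr_ge0 ?exprn_ge0 ?ler0n ?(ltW c0) //.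
  by apply: ler_pM; rewrite ?mulr_ge0 ?exprn_ge0 ?ler0n ?(ltW c0) // ler_wpM2l.
have -> : expR (q * L) * C * (K * expR (- ((q + 3) * L)) * (4 * expR L * expR L))
    = 4 * K * C * expR (- L).
  have eL : expR (q * L) * expR (- ((q + 3) * L)) * expR L * expR L = expR (- L).
    by rewrite -!expRD; congr expR; ring.
  by rewrite -eL; ring.
rewrite ler_piMr ?mulr_ge0 // expR_le1; lra.
Qed.

End Asymptotics.

Theorem lemma2 (d : measure_display) (T : measurableType d) (R : realType)
  (P : probability T R) (A : countType) (X : int -> T -> A) :
  process X -> stationary P X -> finite_energy P X ->
  forall q : R, 0 < q ->
  exists M : R, forall n : nat, (2 <= n)%N ->
    (\int[P]_x (((maxrep (blk X 0 n x))%:R / ln (n%:R)) `^ q)%:E <= M%:E)%E.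
Proof.
move=> hX hS hFE q q0.
have [c [K [c0 c1 K0 hE]]] := finite_energy_bounded hX hFE.
have /set0P[x0 _] : [set: T] != set0.
  apply/eqP => T0; have := probability_setT P.
  by rewrite T0 measure0 => /eqP; rewrite eq_sym onee_eq0.
set a := (q + 3) / - ln c.
have lnc : ln c < 0 by rewrite ln_lt0 // c0 c1.
have a0 : 0 <= a by rewrite divr_ge0 //; lra.
exists (a `^ q + 4 * K * (ln 2)^-1 `^ q) => n n2.
have L0 : 0 < ln (n%:R : R) by rewrite ln_gt0 // ltr1n.
pose k := (Num.truncn (a * ln n%:R)).+1.
have /andP[kL /ltW Lk] := truncn_itv (mulr_ge0 a0 (ltW L0)).
apply: le_trans (integral_maxrep_le (k := k) P hX (ltW q0) L0 kL) _.
rewrite EFinD leeD2l //.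
have tail := maxrep_tail_le (k := k) hX hS (ltW c0) K0 hE (X 0 x0) n (ltn0Sn _).
apply: le_trans (lee_wpmul2l _ tail) _; first by rewrite lee_fin powR_ge0.
by rewrite -EFinM lee_fin tail_term_le.
Qed.
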